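(* Let $\ell,d\ge0$ be integers and $a=(a_1,\dots,a_\ell)\in\{1,\dots,n\}^\ell$. In $W_\eta(2n)$ the following two elements are equal: (i) the sum of all degree-$d$ mixed $x\partial$-monomials indexed by $a$, i.e. $\sum_{T}z_T^{a_1}z_T^{a_2}\cdots z_T^{a_\ell}$, where $T$ runs over subsets of $\{1,\dots,\ell\}$ with $\ell-2|T|=d$, and $z_T^{a_i}=\partial^{a_i}$ if $i\in T$, $z_T^{a_i}=x^{a_i}$ if $i\notin T$; (ii) the sum of all distinct degree-$d$ ordered $\eta x\partial$-monomials indexed by permutations of $a$, i.e. $$\sum_{(M,X)}\ \prod_{\{i,j\}\in M}\eta^{a_ia_j}\prod_{k\in X}x^{a_k}\prod_{k\in U_M\setminus X}\partial^{a_k},$$ where $M$ runs over all sets of pairwise disjoint 2-element subsets of $\{1,\dots,\ell\}$, $U_M$ is the set of positions not covered by $M$, and $X$ runs over subsets of $U_M$ with $|X|-|U_M\setminus X|=d$ (within each product the $x$-factors are written before the $\partial$-factors).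
   Context: $W_\eta(2n)$ is the unital associative $\mathbb{C}$-algebra generated by $x^a,\partial_a$ ($a=1,\dots,n$) and central elements $\eta_{ab},\eta^{ab}$ subject to $x^ax^b=x^bx^a$, $\partial_a\partial_b=\partial_b\partial_a$, $\partial_ax^b-x^b\partial_a=\delta_a^b$, $\eta_{ab}=\eta_{ba}$, $\sum_b\eta_{ab}\eta^{bc}=\delta_a^c$. Put $\partial^a=\sum_b\eta^{ab}\partial_b$; then $\partial^a\partial^b=\partial^b\partial^a$ and $\partial^ax^b-x^b\partial^a=\eta^{ab}$. Grading: $\deg x^a=1$, $\deg\partial_a=\deg\partial^a=-1$, $\deg\eta=0$. In the paper's terminology an ordered $\eta x\partial$-monomial indexed by $b=(b_1,\dots,b_\ell)$ is $(\eta^{b_1b_2}\cdots\eta^{b_{2r-1}b_{2r}})(x^{b_{2r+1}}\cdots x^{b_{2r+s}})(\partial^{b_{2r+s+1}}\cdots\partial^{b_{2r+s+t}})$, of degree $s-t$; ''distinct'' means terms are counted once up to the symmetry $\eta^{ij}=\eta^{ji}$ and reordering of commuting factors, but positions in $a$ are regarded as distinct even if their values coincide; sum (ii) is the explicit sum written in the claim. *)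

From HB Require Import structures.
From mathcomp Require Import all_boot all_order all_algebra.
From mathcomp Require Import reals complex.
Set Implicit Arguments. Unset Strict Implicit. Unset Printing Implicit Defensive.
Import Order.TTheory GRing.Theory Num.Theory.
Local Open Scope ring_scope.

Definition Ctype (R : realType) := complex R.

(* A "W_eta(2n)-datum" in an algebra A: elements x^a, d_a (= \partial_a),
   eta_{ab}, eta^{ab} of A satisfying the defining relations of W_eta(2n).
   An identity holds in W_eta(2n) iff it holds for every such datum in every
   unital associative C-algebra A (universal property of the presentation). *)
Definition weyl_rel (A : ringType) (n : nat)
  (x dl : 'I_n -> A) (etal etau : 'I_n -> 'I_n -> A) : Prop :=
  (forall a b, x a * x b = x b * x a) /\
  (forall a b, dl a * dl b = dl b * dl a) /\
  (forall a b, dl a * x b - x b * dl a = (a == b)%:R) /\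
  (forall a b (y : A), etal a b * y = y * etal a b) /\
  (forall a b (y : A), etau a b * y = y * etau a b) /\
  (forall a b, etal a b = etal b a) /\
  (forall a c, \sum_(b < n) etal a b * etau b c = (a == c)%:R).

Definition dup (A : ringType) (n : nat) (etau : 'I_n -> 'I_n -> A)
  (dl : 'I_n -> A) (a : 'I_n) : A := \sum_(b < n) etau a b * dl b.

Definition mixed_sum (A : ringType) (n l d : nat) (x du : 'I_n -> A)
  (a : 'I_l -> 'I_n) : A :=
  \sum_(T : {set 'I_l} | l == (d + 2 * #|T|)%N)
     \prod_(i < l) (if i \in T then du (a i) else x (a i)).

Definition is_partial_matching (l : nat) (M : {set {set 'I_l}}) : bool :=
  [forall B in M, #|B| == 2%N] && trivIset M.

Definition eta_block (A : ringType) (n l : nat) (etau : 'I_n -> 'I_n -> A)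
  (a : 'I_l -> 'I_n) (B : {set 'I_l}) : A :=
  \prod_(i < l | i \in B) \prod_(j < l | (j \in B) && (i < j)%N) etau (a i) (a j).

Definition ordered_sum (A : ringType) (n l d : nat)
  (x du : 'I_n -> A) (etau : 'I_n -> 'I_n -> A) (a : 'I_l -> 'I_n) : A :=
  \sum_(M : {set {set 'I_l}} | is_partial_matching M)
   \sum_(X : {set 'I_l} | (X \subset ~: cover M) &&
                          (#|X| == d + #|(~: cover M) :\: X|)%N)
     ((\prod_(B in M) eta_block etau a B) *
      (\prod_(k < l | k \in X) x (a k)) *
      (\prod_(k < l | k \in (~: cover M) :\: X) du (a k))).

From HB Require Import structures.
From mathcomp Require Import all_boot all_order all_algebra.
From mathcomp Require Import reals complex.
From mathcomp Require Import zify.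

Set Implicit Arguments. Unset Strict Implicit. Unset Printing Implicit Defensive.
Import GRing.Theory.
Local Open Scope ring_scope.

(* Both sums make sense for any set S of positions, and for the smallest
   position m of S both satisfy
     F(S, d) = x^{a_m} F(S \ m, d - 1) + \partial^{a_m} F(S \ m, d + 1),
   with F(empty, d) = [d = 0].  For the mixed sum this is the split on whether
   m is in T.  For the ordered sum, the monomials in which m is unmatched give
   x^{a_m} F(S \ m, d - 1) and part of \partial^{a_m} F(S \ m, d + 1); the rest
   of the latter comes from moving \partial^{a_m} to the left of the x-factors,
   which by [\partial^a, x^b] = eta^{ab} (central) produces one extra term
   eta^{a_m a_j} for each j in X, and these are exactly the ordered monomials
   in which m is matched with j. *)

Lemma big_pred_neq_notin (R : Type) (idx : R) (op : R -> R -> R) (I : eqType)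
    (r : seq I) (P : pred I) (F : I -> R) i0 :
  i0 \notin r ->
  \big[op/idx]_(i <- r | P i && (i != i0)) F i = \big[op/idx]_(i <- r | P i) F i.
Proof.
move=> i0r; rewrite [LHS]big_seq_cond [RHS]big_seq_cond; apply: eq_bigl => i.
by case: (i =P i0) => [->|]; rewrite ?(negbTE i0r) ?andbT ?andbF.
Qed.

Section NoncommutativeProducts.
Variable R : ringType.

Definition central (c : R) := forall y, GRing.comm c y.

Lemma central_prod (I : Type) (r : seq I) (P : pred I) (F : I -> R) :
  (forall i, central (F i)) -> central (\prod_(i <- r | P i) F i).
Proof.
by move=> F_central y; apply/commr_sym/commr_prod => i _; apply/commr_sym/F_central.
Qed.

Lemma prodrD1_comm (I : eqType) (r : seq I) (P : pred I) (F : I -> R) i0 :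
  uniq r -> i0 \in r -> P i0 ->
  {in take (index i0 r) r, forall i, P i -> GRing.comm (F i) (F i0)} ->
  \prod_(i <- r | P i) F i = F i0 * \prod_(i <- r | P i && (i != i0)) F i.
Proof.
elim: r => //= h t IH /andP[ht ut]; rewrite in_cons !big_cons eq_sym.
have [<- _ Pi0 _ | hi0 /= i0t Pi0 comm_i0] := eqVneq h i0.
  by rewrite Pi0 big_pred_neq_notin.
have {}IH : \prod_(i <- t | P i) F i = F i0 * \prod_(i <- t | P i && (i != i0)) F i.
  by apply: IH => // i it; apply: comm_i0; rewrite inE it orbT.
rewrite andbT IH; case: ifP => // Ph.
by rewrite !mulrA comm_i0 // mem_head.
Qed.

Lemma prodrD1_min l (S : {set 'I_l}) (F : 'I_l -> R) m :
  m \in S -> {in S, forall i : 'I_l, m <= i}%N ->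
  \prod_(i < l | i \in S) F i = F m * \prod_(i < l | i \in S :\ m) F i.
Proof.
move=> Sm m_min; rewrite (prodrD1_comm (index_enum_uniq _) (mem_index_enum m)) //.
  by congr (_ * _); apply: eq_bigl => i; rewrite in_setD1 andbC.
have -> : index_enum 'I_l = enum 'I_l by rewrite enumT.
move=> i /index_ltn; rewrite !index_enum_ord => lt_im Si.
by have := m_min i Si; rewrite leqNgt lt_im.
Qed.

Lemma prodr_setU1_comm (I : finType) (X : {set I}) (F : I -> R) i0 :
  i0 \notin X -> {in X, forall i, GRing.comm (F i) (F i0)} ->
  \prod_(i in i0 |: X) F i = F i0 * \prod_(i in X) F i.
Proof.
move=> i0X comm_i0.
rewrite (prodrD1_comm (index_enum_uniq _) (mem_index_enum i0)) ?setU11 //.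
  congr (_ * _); apply: eq_bigl => i; rewrite in_setU1.
  by have [->|_] := eqVneq i i0; rewrite ?eqxx ?(negbTE i0X) ?andbT.
by move=> i _; rewrite in_setU1 => /predU1P[->|]; [exact: commr_refl | exact: comm_i0].
Qed.

Lemma mulr_prod_leibniz (I : eqType) (r : seq I) (P : pred I) (u : R) (f c : I -> R) :
  uniq r -> (forall i, u * f i = f i * u + c i) -> (forall i, central (c i)) ->
  u * \prod_(k <- r | P k) f k = \prod_(k <- r | P k) f k * u +
     \sum_(j <- r | P j) c j * \prod_(k <- r | P k && (k != j)) f k.
Proof.
move=> + uf c_central; elim: r => [|h t IH] /=; first by rewrite !big_nil mulr1 mul1r addr0.
case/andP=> ht ut; rewrite [in LHS]big_cons [\prod_(k <- h :: t | P k) f k]big_cons.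
rewrite [\sum_(j <- h :: t | P j) _]big_cons; case: ifP => Ph /=; last first.
  rewrite IH //; congr (_ + _); apply: eq_bigr => j _; by rewrite big_cons Ph.
rewrite big_cons Ph eqxx /= big_pred_neq_notin //.
rewrite mulrA uf mulrDl -mulrA IH // mulrDr !mulrA -addrA; congr (_ + _).
rewrite addrC; congr (_ + _).
rewrite mulr_sumr [LHS]big_seq_cond [RHS]big_seq_cond; apply: eq_bigr => j /andP[jt _].
have hj : h != j by apply: contraNneq ht => ->.
by rewrite big_cons Ph hj /= mulrA -c_central -mulrA.
Qed.

Lemma exchange_big3 (I J K : finType) (P1 : I -> bool) (P2 : I -> J -> bool)
    (P3 : I -> J -> K -> bool) (Q1 : J -> bool) (Q2 : J -> K -> bool)
    (Q3 : J -> K -> I -> bool) (F : I -> J -> K -> R) :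
  (forall i j k, [&& P1 i, P2 i j & P3 i j k] = [&& Q1 j, Q2 j k & Q3 j k i]) ->
  \sum_(i | P1 i) \sum_(j | P2 i j) \sum_(k | P3 i j k) F i j k =
  \sum_(j | Q1 j) \sum_(k | Q2 j k) \sum_(i | Q3 j k i) F i j k.
Proof.
have mkcond3 (I' J' K' : finType) p1 p2 p3 (G : I' -> J' -> K' -> R) :
    \sum_(i | p1 i) \sum_(j | p2 i j) \sum_(k | p3 i j k) G i j k =
    \sum_i \sum_j \sum_k (if [&& p1 i, p2 i j & p3 i j k] then G i j k else 0).
  rewrite big_mkcond; apply: eq_bigr => i _; case: (p1 i) => /=; last first.
    by rewrite big1 // => j _; rewrite big1.
  rewrite big_mkcond; apply: eq_bigr => j _; case: (p2 i j) => /=; last by rewrite big1.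
  by rewrite big_mkcond.
move=> E; rewrite mkcond3 [RHS]mkcond3 exchange_big; apply: eq_bigr => j _.
by rewrite exchange_big; apply: eq_bigr => k _; apply: eq_bigr => i _; rewrite E.
Qed.

End NoncommutativeProducts.

Section FinsetLemmas.
Variable T : finType.
Implicit Types (U X B : {set T}) (M : {set {set T}}) (m j : T).

Lemma cover_setU1 B M : cover (B |: M) = B :|: cover M.
Proof. by rewrite /cover bigcup_setU big_set1. Qed.

Lemma setD1K_eq X j : (j |: (X :\ j) == X) = (j \in X).
Proof. by apply/eqP/idP => [<-|/setD1K //]; apply: setU11. Qed.

Lemma setU1K_eq X j : ((j |: X) :\ j == X) = (j \notin X).
Proof. by apply/eqP/idP => [<-|/setU1K //]; rewrite setD11. Qed.

Lemma subsetU1_notin X U m : m \notin X -> (X \subset m |: U) = (X \subset U).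
Proof.
move=> mX; apply/subsetP/subsetP => sXU y yX; last by rewrite in_setU1 sXU ?orbT.
by have /setU1P[ym|//] := sXU y yX; rewrite -ym yX in mX.
Qed.

Lemma setDU1U1 X U m : m \notin U -> (m |: U) :\: (m |: X) = U :\: X.
Proof.
move=> mU; apply/setP => y; rewrite !inE negb_or.
by have [->|] := eqVneq y m; rewrite ?(negbTE mU) ?andbF.
Qed.

Lemma setU1D X U m : m \notin X -> (m |: U) :\: X = m |: (U :\: X).
Proof.
move=> mX; apply/setP => y; rewrite !inE.
by have [->|] := eqVneq y m; rewrite ?(negbTE mX).
Qed.

Lemma setD1S_eq X U j : j \in X -> j \in U -> (X :\ j \subset U :\ j) = (X \subset U).
Proof.
move=> jX jU; rewrite subsetD1 !inE eqxx /= andbT.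
apply/idP/idP => [sXU|/(subset_trans (subD1set X j))//].
by rewrite -(setD1K jX) subUset sub1set jU.
Qed.

Lemma setDD1D1 X U j : j \in X -> (U :\ j) :\: (X :\ j) = U :\: X.
Proof.
move=> jX; apply/setP => y; rewrite !inE.
by have [->|] := eqVneq y j; rewrite ?jX ?andbF.
Qed.

End FinsetLemmas.

Section Matchings.
Variable l : nat.
Implicit Types (S B C : {set 'I_l}) (M : {set {set 'I_l}}) (m j : 'I_l).

Definition matching_in S M := is_partial_matching M && (cover M \subset S).

Lemma matching_in0 M : matching_in set0 M = (M == set0).
Proof.
apply/idP/eqP => [/andP[/andP[/forall_inP M2 _] sM0]|->].
  apply/setP => B; rewrite in_set0; apply/negP => BM.
  have /cards2P[y [z [_ Byz]]] := M2 B BM.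
  have : y \in cover M by apply/bigcupP; exists B; rewrite // Byz setU11.
  by move/(subsetP sM0); rewrite in_set0.
rewrite /matching_in /is_partial_matching /cover big_set0 sub0set andbT.
apply/andP; split; first by apply/forall_inP => B; rewrite in_set0.
by apply/trivIsetP => B; rewrite in_set0.
Qed.

Lemma matching_partner M m : is_partial_matching M -> m \in cover M ->
  exists j, forall j', ([set m; j'] \in M) = (j' == j).
Proof.
case/andP => /forall_inP M2 tM mM.
have mP : m \in pblock M m by rewrite mem_pblock.
have /cards2P [y [z [_ Pyz]]] := M2 _ (pblock_mem mM).
have [j Pmj] : exists j, pblock M m = [set m; j].
  move: mP; rewrite Pyz !inE => /orP[/eqP<-|/eqP<-]; first by exists z.
  by exists y; rewrite setUC.
exists j => j'; apply/idP/eqP => [mj'M|->]; last by rewrite -Pmj pblock_mem.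
have := def_pblock tM mj'M (setU11 m [set j']); rewrite Pmj => E.
have : j' \in [set m; j] by rewrite E !inE eqxx orbT.
rewrite !inE => /orP[/eqP j'm|/eqP //].
by have := M2 _ mj'M; rewrite -j'm setUid cards1.
Qed.

Lemma matching_in_add_pair S M m j : m \in S ->
  matching_in S ([set m; j] |: M) && ([set m; j] \notin M) =
  (j \in S :\ m) && matching_in (S :\ m :\ j) M.
Proof.
set B := [set m; j] => mS; rewrite /matching_in /is_partial_matching.
apply/idP/idP.
  case/andP => /andP[/andP[/forall_inP M2 tM] sMS] BM.
  have mj : m != j by have := M2 B (setU11 _ _); rewrite cards2; case: (m != j).
  have jS : j \in S by apply: (subsetP sMS); rewrite cover_setU1 !inE eqxx !orbT.
  have sM : M \subset B |: M by apply: subsetU1.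
  have M2' : [forall C in M, #|C| == 2%N].
    by apply/forall_inP => C CM; apply: M2; rewrite in_setU1 CM orbT.
  rewrite in_setD1 eq_sym mj jS (trivIsetS sM tM) M2' /=.
  apply/subsetP => y /bigcupP [C CM yC].
  have CB : C != B by apply: contraNneq BM => <-.
  have /trivIsetP/(_ C B) := tM; rewrite in_setU1 CM orbT setU11 => /(_ isT isT CB).
  move/disjointFr => /(_ y yC) /negbT; rewrite !inE negb_or => /andP[ym yj].
  by rewrite ym yj (subsetP sMS) // cover_setU1 in_setU; apply/orP; right; apply/bigcupP; exists C.
case/and3P => /setD1P[jm jS] /andP[/forall_inP M2 tM] sMS.
have disjB : {in M, forall C, [disjoint B & C]}.
  move=> C CM; rewrite disjoint_sym disjoint_subset; apply/subsetP => y yC.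
  have : y \in S :\ m :\ j by apply: (subsetP sMS); apply/bigcupP; exists C.
  by rewrite !inE => /and3P[yj ym _]; rewrite negb_or yj ym.
have M0 : set0 \notin M by apply/negP => /M2; rewrite cards0.
have [tU ->] := trivIsetU1 disjB tM M0.
have BM2 : [forall C in B |: M, #|C| == 2%N].
  apply/forall_inP => C; rewrite in_setU1 => /predU1P[->|/M2 //].
  by rewrite /B cards2 (eq_sym m) jm.
have sBS : B \subset S by apply/subsetP => y; rewrite !inE => /orP[]/eqP->.
have sMS' : cover M \subset S.
  by apply: subset_trans sMS (subset_trans (subD1set _ _) (subD1set _ _)).
by rewrite BM2 tU cover_setU1 subUset sBS sMS'.
Qed.

End Matchings.

Section WeylDatum.
Variables (A : ringType) (n l : nat) (x dl : 'I_n -> A) (etal etau : 'I_n -> 'I_n -> A).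
Hypothesis rel : weyl_rel x dl etal etau.
Variable a : 'I_l -> 'I_n.

Local Notation du := (dup etau dl).
Implicit Types (S T X B : {set 'I_l}) (M : {set {set 'I_l}}) (m j : 'I_l) (d : int).

Lemma x_comm (i k : 'I_n) : GRing.comm (x i) (x k).
Proof. by case: rel. Qed.

Lemma dl_comm (i k : 'I_n) : GRing.comm (dl i) (dl k).
Proof. by case: rel => _ []. Qed.

Lemma dl_x (i k : 'I_n) : dl i * x k - x k * dl i = (i == k)%:R.
Proof. by case: rel => _ [_ []]. Qed.

Lemma etau_central (i k : 'I_n) : central (etau i k).
Proof. by case: rel => _ [_ [_ [_ [etau_comm _]]]] y; apply: etau_comm. Qed.

Lemma dup_comm (i k : 'I_n) : GRing.comm (du i) (du k).
Proof.
have mul_central (p q r s : A) : central r -> p * q * (r * s) = p * r * (q * s).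
  by move=> r_central; rewrite -!mulrA (mulrA q) -r_central -mulrA.
rewrite /GRing.comm /dup !mulr_suml; under eq_bigr do rewrite mulr_sumr.
under [RHS]eq_bigr do rewrite mulr_sumr.
rewrite [RHS]exchange_big; apply: eq_bigr => c _; apply: eq_bigr => e _.
rewrite (mul_central _ _ _ _ (etau_central k e)) (mul_central _ _ _ _ (etau_central i c)).
by rewrite (dl_comm c e) (etau_central i c).
Qed.

Lemma dup_x (i k : 'I_n) : du i * x k = x k * du i + etau i k.
Proof.
suff <- : du i * x k - x k * du i = etau i k by rewrite addrC subrK.
have term c : etau i c * dl c * x k - x k * (etau i c * dl c) = etau i c * (c == k)%:R.
  by rewrite -dl_x mulrBr !mulrA (etau_central i c (x k)).
rewrite /dup mulr_suml mulr_sumr -sumrB (eq_bigr _ (fun c _ => term c)).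
by rewrite (bigD1 k) //= eqxx mulr1 big1 ?addr0 // => c /negbTE->; rewrite mulr0.
Qed.

Lemma eta_block_central B : central (eta_block etau a B).
Proof. by apply: central_prod => i; apply: central_prod => k; apply: etau_central. Qed.

Lemma eta_block_pair m j : (m < j)%N -> eta_block etau a [set m; j] = etau (a m) (a j).
Proof.
move=> lt_mj; have m_min : {in [set m; j], forall i : 'I_l, m <= i}%N.
  by move=> i; rewrite !inE => /orP[]/eqP->; [exact: leqnn | exact: ltnW].
rewrite /eta_block (prodrD1_min _ (setU11 m [set j])) // setU1K; last first.
  by rewrite in_set1 neq_ltn lt_mj.
rewrite big_set1 [X in _ * X]big_pred0 => [|i]; last first.
  apply/negbTE/andP; rewrite !inE => -[/orP[]/eqP-> lt_j].
    by have := ltn_trans lt_mj lt_j; rewrite ltnn.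
  by rewrite ltnn in lt_j.
rewrite mulr1 (big_pred1 j) // => i; rewrite !inE.
by have [->|_] := eqVneq i j; rewrite ?orbT ?lt_mj // orbF; case: eqP => // ->; rewrite ltnn.
Qed.

Definition eta_matching M : A := \prod_(B in M) eta_block etau a B.

Lemma eta_matching_central M : central (eta_matching M).
Proof. exact/central_prod/eta_block_central. Qed.

Lemma eta_matching_setU1 B M :
  B \notin M -> eta_matching (B |: M) = eta_block etau a B * eta_matching M.
Proof.
by move=> BM; rewrite /eta_matching prodr_setU1_comm // => C _; apply: eta_block_central.
Qed.

Definition mixed_sum_on S d : A :=
  \sum_(T : {set 'I_l} | (T \subset S) && (#|S|%:Z == d + (2 * #|T|)%N%:Z))
     \prod_(i < l | i \in S) (if i \in T then du (a i) else x (a i)).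

Lemma mixed_sum_on_rec S m d : m \in S -> {in S, forall i : 'I_l, m <= i}%N ->
  mixed_sum_on S d =
  x (a m) * mixed_sum_on (S :\ m) (d - 1) + du (a m) * mixed_sum_on (S :\ m) (d + 1).
Proof.
move=> Sm m_min; rewrite /mixed_sum_on (bigID (fun T => m \in T)) /= addrC !mulr_sumr.
have card_S : #|S| = (1 + #|S :\ m|)%N by rewrite (cardsD1 m S) Sm.
congr (_ + _).
  apply: eq_big => T.
    rewrite subsetD1 card_S; case: (T \subset S) (m \in T) => [] [] //=; apply/eqP/eqP; lia.
  by case/andP => _ mT; rewrite (prodrD1_min _ Sm m_min) (negbTE mT).
rewrite (reindex_onto (fun T' => m |: T') (fun T => T :\ m)) /=; last first.
  by move=> T /andP[_ mT]; rewrite setD1K.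
apply: eq_big => T.
  rewrite setU1K_eq subsetD1 setU11 andbT; case mT: (m \in T); first by rewrite !andbF.
  rewrite subUset sub1set Sm cardsU1 mT card_S /= andbT.
  by case: (T \subset S) => //=; apply/eqP/eqP; lia.
case/andP => _; rewrite setU1K_eq => mT.
rewrite (prodrD1_min _ Sm m_min) setU11; congr (_ * _); apply: eq_bigr => i.
by rewrite in_setD1 => /andP[im _]; rewrite in_setU1 (negbTE im).
Qed.

Definition ordered_monomial S M X : A :=
  eta_matching M * \prod_(k < l | k \in X) x (a k) *
  \prod_(k < l | k \in (S :\: cover M) :\: X) du (a k).

Definition degree_split S M d X :=
  (X \subset S :\: cover M) && (#|X|%:Z == d + #|(S :\: cover M) :\: X|%:Z).

Definition ordered_sum_on S d : A :=
  \sum_(M | matching_in S M) \sum_(X | degree_split S M d X) ordered_monomial S M X.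

Lemma sum_ordered_monomial_uncovered S M m d :
  m \in S -> cover M \subset S :\ m ->
  \sum_(X | degree_split S M d X) ordered_monomial S M X =
  x (a m) * \sum_(X | degree_split (S :\ m) M (d - 1) X) ordered_monomial (S :\ m) M X +
  \sum_(X | degree_split (S :\ m) M (d + 1) X)
     eta_matching M * \prod_(k < l | k \in X) x (a k) *
     (du (a m) * \prod_(k < l | k \in (S :\ m :\: cover M) :\: X) du (a k)).
Proof.
move=> Sm sMS; have mM : m \notin cover M.
  by apply/negP => /(subsetP sMS); rewrite !inE eqxx.
set U := S :\ m :\: cover M.
have U_m : S :\: cover M = m |: U.
  by apply/setP => y; rewrite !inE; case: eqVneq => [->|] //=; rewrite mM Sm.
have mU : m \notin U by rewrite /U !inE eqxx andbF.
have mX_U X : m \in X -> (X \subset U) = false.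
  by move=> mX; apply/negbTE/negP => /subsetP/(_ m mX); apply/negP.
rewrite /degree_split -/U U_m (bigID (fun X => m \in X)) /=; congr (_ + _).
  rewrite mulr_sumr (reindex_onto (fun X => m |: X) (fun X => X :\ m)) /=; last first.
    by move=> X /andP[_ mX]; rewrite setD1K.
  apply: eq_big => X.
    rewrite setU1K_eq setU11 andbT; case mX: (m \in X) => /=; first by rewrite andbF mX_U.
    rewrite andbT subUset sub1set setU11 subsetU1_notin ?mX // cardsU1 mX setDU1U1 //.
    by case: (X \subset U) => //=; apply/eqP/eqP; lia.
  case/andP => _; rewrite setU1K_eq => mX.
  rewrite /ordered_monomial U_m setDU1U1 // prodr_setU1_comm //; last by move=> i _; apply: x_comm.
  by rewrite mulrA (eta_matching_central M (x (a m))) !mulrA.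
apply: eq_big => X.
  case mX: (m \in X); rewrite /= ?andbF ?andbT; first by rewrite mX_U.
  have mUX : m \notin U :\: X by rewrite in_setD (negbTE mU) andbF.
  rewrite subsetU1_notin ?mX // setU1D ?mX // cardsU1 mUX.
  by case: (X \subset U) => //=; apply/eqP/eqP; lia.
case/andP => _ mX.
rewrite /ordered_monomial U_m setU1D // prodr_setU1_comm //; last by move=> i _; apply: dup_comm.
by rewrite in_setD (negbTE mU) andbF.
Qed.

(* The term produced by commuting [du (a m)] past [x (a j)], [j \in X]: the
   ordered monomial of [m |: S] in which [m] is matched with [j]. *)
Definition pair_monomial S m j M X : A :=
  etau (a m) (a j) * (eta_matching M * \prod_(k < l | k \in X :\ j) x (a k) *
     \prod_(k < l | k \in (S :\: cover M) :\: X) du (a k)).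

Lemma sum_ordered_monomial_pair S M m j d :
  m \in S -> (m < j)%N -> j \in S :\ m -> matching_in (S :\ m :\ j) M ->
  \sum_(X | degree_split S ([set m; j] |: M) d X) ordered_monomial S ([set m; j] |: M) X =
  \sum_(X : {set 'I_l} | (j \in X) && degree_split (S :\ m) M (d + 1) X)
     pair_monomial (S :\ m) m j M X.
Proof.
move=> Sm lt_mj jS /andP[_ sMS]; set B := [set m; j].
have BM : B \notin M.
  apply/negP => BM; have : m \in cover M by apply/bigcupP; exists B; rewrite // setU11.
  by move/(subsetP sMS); rewrite !inE eqxx andbF.
set U := S :\ m :\: cover M.
have jU : j \in U.
  by rewrite in_setD jS andbT; apply/negP => /(subsetP sMS); rewrite !inE eqxx.
have free_BM : S :\: cover (B |: M) = U :\ j.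
  apply/setP => y; rewrite cover_setU1 !inE negb_or.
  by case: (y == j); case: (y == m); case: (y \in cover M); case: (y \in S).
rewrite /degree_split free_BM -/U (reindex_onto (fun X => X :\ j) (fun X => j |: X)) /=; last first.
  move=> X /andP[sXU _]; rewrite setU1K //; apply/negP => /(subsetP sXU).
  by rewrite !inE eqxx.
apply: eq_big => X.
  rewrite setD1K_eq; case jX: (j \in X); last by rewrite !andbF.
  rewrite andbT /= setD1S_eq // setDD1D1 // (cardsD1 j X) jX.
  (* Generalizing first: the two copies of [#|U :\: X|] differ in their finType
     instance, and [lia] would treat them as distinct atoms. *)
  by case: (X \subset U) => //=; move: #|U :\: X| #|X :\ j| => t k; apply/eqP/eqP; lia.
case/andP => _; rewrite setD1K_eq => jX.
rewrite /ordered_monomial /pair_monomial free_BM eta_matching_setU1 // eta_block_pair //.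
by rewrite setDD1D1 // !mulrA.
Qed.

Lemma dup_mul_prod_x (i : 'I_n) X :
  du i * \prod_(k < l | k \in X) x (a k) =
  \prod_(k < l | k \in X) x (a k) * du i +
  \sum_(j < l | j \in X) etau i (a j) * \prod_(k < l | k \in X :\ j) x (a k).
Proof.
rewrite (mulr_prod_leibniz _ (index_enum_uniq _) (fun k => dup_x i (a k))
  (fun k => etau_central i (a k))).
congr (_ + _); apply: eq_bigr => j _; congr (_ * _).
by apply: eq_bigl => k; rewrite in_setD1 andbC.
Qed.

Lemma dup_mul_ordered_monomial S M m X :
  du (a m) * ordered_monomial S M X =
  eta_matching M * \prod_(k < l | k \in X) x (a k) *
    (du (a m) * \prod_(k < l | k \in (S :\: cover M) :\: X) du (a k)) +
  \sum_(j | j \in X) pair_monomial S m j M X.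
Proof.
rewrite /ordered_monomial mulrA [du _ * _]mulrA -(eta_matching_central M (du _)).
rewrite -(mulrA (eta_matching M)) dup_mul_prod_x mulrDr mulrDl; congr (_ + _).
  by rewrite !mulrA.
rewrite mulr_sumr mulr_suml; apply: eq_bigr => j _.
by rewrite /pair_monomial !mulrA (eta_matching_central M).
Qed.

Lemma ordered_sum_covered S m d : m \in S -> {in S, forall i : 'I_l, m <= i}%N ->
  \sum_(M | matching_in S M && (m \in cover M))
     \sum_(X | degree_split S M d X) ordered_monomial S M X =
  \sum_(M | matching_in (S :\ m) M) \sum_(X | degree_split (S :\ m) M (d + 1) X)
     \sum_(j | j \in X) pair_monomial (S :\ m) m j M X.
Proof.
move=> Sm m_min.
transitivity (\sum_(M | matching_in S M && (m \in cover M)) \sum_(j | [set m; j] \in M)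
    \sum_(X | degree_split S M d X) ordered_monomial S M X).
  apply: eq_bigr => M /andP[/andP[pM _] mM]; have [j partner_j] := matching_partner pM mM.
  by rewrite (big_pred1 j).
rewrite (exchange_big_dep predT) //=.
transitivity (\sum_j \sum_(M | (j \in S :\ m) && matching_in (S :\ m :\ j) M)
    \sum_(X : {set 'I_l} | (j \in X) && degree_split (S :\ m) M (d + 1) X)
      pair_monomial (S :\ m) m j M X).
  apply: eq_bigr => j _; set B := [set m; j].
  rewrite (reindex_onto (fun M => B |: M) (fun M => M :\ B)) /=; last first.
    by move=> M /andP[_ BM]; rewrite setD1K.
  have cond M : [&& matching_in S (B |: M) && (m \in cover (B |: M)), B \in B |: M
                  & (B |: M) :\ B == M] = (j \in S :\ m) && matching_in (S :\ m :\ j) M.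
    by rewrite cover_setU1 in_setU !setU11 setU1K_eq /= andbT matching_in_add_pair.
  apply: eq_big => M; first by rewrite -andbA cond.
  rewrite -andbA cond => /andP[jS MS]; apply: sum_ordered_monomial_pair => //.
  by move: jS; rewrite in_setD1 => /andP[jm /m_min le_mj]; rewrite ltn_neqAle eq_sym jm.
apply: exchange_big3 => j M X.
rewrite /matching_in /degree_split subsetD1 /=.
case jX: (j \in X); rewrite /= ?andbF ?andbT //.
case sX: (X \subset (S :\ m) :\: cover M); rewrite /= ?andbF ?andbT //.
have := subsetP sX j jX; rewrite in_setD => /andP[-> ->] /=.
by case: (is_partial_matching M); case: (cover M \subset S :\ m); case: (_ == _).
Qed.

Lemma ordered_sum_uncovered S m d : m \in S ->
  \sum_(M | matching_in S M && (m \notin cover M))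
     \sum_(X | degree_split S M d X) ordered_monomial S M X =
  x (a m) * ordered_sum_on (S :\ m) (d - 1) +
  \sum_(M | matching_in (S :\ m) M) \sum_(X | degree_split (S :\ m) M (d + 1) X)
     eta_matching M * \prod_(k < l | k \in X) x (a k) *
     (du (a m) * \prod_(k < l | k \in (S :\ m :\: cover M) :\: X) du (a k)).
Proof.
move=> Sm; rewrite /ordered_sum_on mulr_sumr -big_split /=.
apply: eq_big => [M|M /andP[/andP[_ sMS] mM]]; first by rewrite /matching_in subsetD1 andbA.
by apply: sum_ordered_monomial_uncovered; rewrite // subsetD1 sMS.
Qed.

Lemma ordered_sum_on_rec S m d : m \in S -> {in S, forall i : 'I_l, m <= i}%N ->
  ordered_sum_on S d =
  x (a m) * ordered_sum_on (S :\ m) (d - 1) + du (a m) * ordered_sum_on (S :\ m) (d + 1).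
Proof.
move=> Sm m_min; rewrite [LHS](bigID (fun M => m \in cover M)) /= addrC.
rewrite ordered_sum_uncovered ?ordered_sum_covered // -addrA; congr (_ + _).
rewrite -big_split mulr_sumr; apply: eq_bigr => M _.
rewrite -big_split mulr_sumr; apply: eq_bigr => X _.
by rewrite dup_mul_ordered_monomial.
Qed.

Lemma mixed_sum_on0 d : mixed_sum_on set0 d = (d == 0)%:R.
Proof.
rewrite /mixed_sum_on (eq_bigl (fun T => (T == set0) && (d == 0))) => [|T]; last first.
  by rewrite subset0 cards0; case: eqP => [->|] //=; rewrite cards0; apply/eqP/eqP; lia.
case: eqP => _; last by rewrite big_pred0 // => T; rewrite andbF.
rewrite (big_pred1 set0) => [|T]; last by rewrite andbT.
by rewrite big_pred0 // => i; rewrite in_set0.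
Qed.

Lemma ordered_sum_on0 d : ordered_sum_on set0 d = (d == 0)%:R.
Proof.
rewrite /ordered_sum_on (big_pred1 set0) => [|M]; last exact: matching_in0.
rewrite (eq_bigl (fun X => (X == set0) && (d == 0))) => [|X]; last first.
  rewrite /degree_split set0D subset0; case: eqP => [->|] //=.
  by rewrite set0D !cards0; apply/eqP/eqP; lia.
case: eqP => _; last by rewrite big_pred0 // => X; rewrite andbF.
rewrite (big_pred1 set0) => [|X]; last by rewrite andbT.
by rewrite /ordered_monomial /eta_matching !big_pred0 ?mulr1 // => i; rewrite !inE ?andbF.
Qed.

Lemma mixed_sum_on_ordered S d : mixed_sum_on S d = ordered_sum_on S d.
Proof.
move: {2}#|S| (leqnn #|S|) => k; elim: k S d => [|k IH] S d card_S.
  by move: card_S; rewrite leqn0 cards_eq0 => /eqP->; rewrite mixed_sum_on0 ordered_sum_on0.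
have [->|[i0 Si0]] := set_0Vmem S; first by rewrite mixed_sum_on0 ordered_sum_on0.
have [m Sm m_min] := @arg_minnP _ i0 (fun i : 'I_l => i \in S) val Si0.
have card_Sm : (#|S :\ m| <= k)%N by move: card_S; rewrite (cardsD1 m S) Sm.
by rewrite (mixed_sum_on_rec _ Sm m_min) (ordered_sum_on_rec _ Sm m_min) !IH.
Qed.

Lemma mixed_sum_eq_ordered_sum (d : nat) : mixed_sum d x du a = ordered_sum d x du etau a.
Proof.
have -> : mixed_sum d x du a = mixed_sum_on setT d.
  rewrite /mixed_sum /mixed_sum_on; apply: eq_big => [T|T _].
    by rewrite subsetT cardsT card_ord -PoszD eqz_nat.
  by apply: eq_bigl => i; rewrite in_setT.
have -> : ordered_sum d x du etau a = ordered_sum_on setT d.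
  rewrite /ordered_sum /ordered_sum_on; apply: eq_big => [M|M _].
    by rewrite /matching_in subsetT andbT.
  apply: eq_big => [X|X _]; first by rewrite /degree_split setTD -PoszD eqz_nat.
  by rewrite /ordered_monomial setTD.
exact: mixed_sum_on_ordered.
Qed.

End WeylDatum.

Theorem mainTheorem5 (R : realType) (A : algType (Ctype R)) (n : nat)
  (x dl : 'I_n -> A) (etal etau : 'I_n -> 'I_n -> A)
  (Hrel : weyl_rel x dl etal etau)
  (l d : nat) (a : 'I_l -> 'I_n) :
  mixed_sum d x (dup etau dl) a = ordered_sum d x (dup etau dl) etau a.
Proof. exact: (mixed_sum_eq_ordered_sum Hrel a d). Qed.
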